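(* Let $n,k$ be positive integers with $n\ge 3k$, and let $\mathcal F\subset\binom{[n]}{k}$ be an intersecting family with $|\mathcal F|\le \binom{n-1}{k-1}/(2k)$. Then $$|\mathcal D(\mathcal F)|\le\sum_{0\le \ell<k}\binom{n-1}{\ell}.$$
   Context: $[n]=\{1,\dots,n\}$; $\binom{[n]}{k}$ is the family of all $k$-element subsets of $[n]$. A family $\mathcal F$ is intersecting if $F\cap F'\neq\varnothing$ for all $F,F'\in\mathcal F$. $\mathcal D(\mathcal F):=\{F\setminus F' : F,F'\in\mathcal F\}$. *)

From mathcomp Require Import all_boot.
Set Implicit Arguments. Unset Strict Implicit. Unset Printing Implicit Defensive.

Definition uniform_fam (n k : nat) (F : {set {set 'I_n}}) : Prop :=
  forall A, A \in F -> #|A| = k.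

Definition intersecting (n : nat) (F : {set {set 'I_n}}) : Prop :=
  forall A B, A \in F -> B \in F -> A :&: B != set0.

Definition diff_family (n : nat) (F : {set {set 'I_n}}) : {set {set 'I_n}} :=
  [set A :\: B | A in F, B in F].

From mathcomp Require Import all_boot.
From mathcomp Require Import zify.

Set Implicit Arguments.
Unset Strict Implicit.
Unset Printing Implicit Defensive.

(* Let F be a k-uniform intersecting family.  For A, B in F the
   set A \ B has k - |A :&: B| elements with |A :&: B| >= 1, so either
   |A \ B| < k - 1, or |A :&: B| = 1 and A \ B = A \ {x} for the unique common
   point x.  Hence D(F) lies in the union of the family of all subsets of [n]
   with fewer than k - 1 elements and the shadow {A \ {x} : A in F, x in A}.
   The first family has sum_(l < k-1) C(n, l) members, the shadow at most
   k |F| <= C(n-1, k-1) / 2 members.  The theorem then reduces to the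
   inequality sum_(l < k-1) C(n, l) + C(n-1, k-1) / 2 <= sum_(l < k) C(n-1, l),
   which follows from Pascal's rule and the fact that for n >= 3k the
   binomial coefficients C(n-1, l), l < k, at least double at each step. *)

Lemma card_bigcup_le (I T : finType) (P : pred I) (G : I -> {set T}) :
  #|\bigcup_(i | P i) G i| <= \sum_(i | P i) #|G i|.
Proof.
elim/big_ind2: _ => [|A m B p leA leB|//]; first by rewrite cards0.
rewrite cardsU; apply: leq_trans (leq_subr _ _) _; exact: leq_add.
Qed.

Definition small_sets (n m : nat) : {set {set 'I_n}} := [set X : {set 'I_n} | #|X| < m].

Definition shadow (n : nat) (F : {set {set 'I_n}}) : {set {set 'I_n}} :=
  \bigcup_(A in F) [set A :\ x | x in A].

Lemma diff_small_or_delete (T : finType) (k : nat) (A B : {set T}) :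
  #|A| = k -> A :&: B != set0 ->
  #|A :\: B| < k.-1 \/ exists2 x, x \in A & A :\: B = A :\ x.
Proof.
move=> cardA meetAB.
have cardAB : 0 < #|A :&: B| by rewrite card_gt0.
have splitA := cardsD A B; rewrite cardA in splitA.
have [small|big] := ltnP #|A :\: B| k.-1; [by left | right].
have leAB : #|A :&: B| <= k by rewrite -cardA subset_leq_card ?subsetIl.
have /cards1P [x AB_x] : #|A :&: B| == 1 by lia.
have /setIP [Ax _] : x \in A :&: B by rewrite AB_x set11.
exists x => //; apply/setP => y; rewrite !inE.
move/setP/(_ y): AB_x; rewrite !inE.
by case: (y \in A) (y \in B) (y == x) => [] [] [].
Qed.

Lemma diff_family_cover (n k : nat) (F : {set {set 'I_n}}) :
  uniform_fam k F -> intersecting F ->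
  diff_family F \subset small_sets n k.-1 :|: shadow F.
Proof.
move=> unifF interF; apply/subsetP => _ /imset2P [A B FA FB ->].
case: (diff_small_or_delete (unifF A FA) (interF A B FA FB)) => [small|].
  by rewrite in_setU inE small.
case=> x Ax ->; rewrite in_setU; apply/orP; right.
by apply/bigcupP; exists A => //; apply/imsetP; exists x.
Qed.

Lemma card_small_sets (n m : nat) :
  #|small_sets n m| <= \sum_(0 <= l < m) 'C(n, l).
Proof.
have -> : small_sets n m = \bigcup_(l < m) [set X : {set 'I_n} | #|X| == l].
  apply/setP => X; rewrite inE; apply/idP/bigcupP => [lt_m | [l _]].
    by exists (Ordinal lt_m); rewrite ?inE.
  by rewrite inE => /eqP ->.
apply: leq_trans (card_bigcup_le _ _) _.
by rewrite big_mkord; apply: leq_sum => l _; rewrite card_draws card_ord.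
Qed.

Lemma card_shadow (n k : nat) (F : {set {set 'I_n}}) :
  uniform_fam k F -> #|shadow F| <= #|F| * k.
Proof.
move=> unifF; apply: leq_trans (card_bigcup_le _ _) _.
rewrite -sum1_card big_distrl /=; apply: leq_sum => A FA.
by rewrite mul1n -(unifF A FA) leq_imset_card.
Qed.

Lemma sum_bin_pascal (N m : nat) :
  \sum_(0 <= l < m.+1) 'C(N.+1, l) =
  \sum_(0 <= l < m.+1) 'C(N, l) + \sum_(0 <= l < m) 'C(N, l).
Proof.
elim: m => [|m IH]; first by rewrite !big_nat1 big_geq // !bin0.
by rewrite big_nat_recr //= IH binS !big_nat_recr //=; lia.
Qed.

(* Far from the middle of the row the binomial coefficients at least double:
   C(N, m+1) / C(N, m) = (N - m) / (m + 1) >= 2 when 3(m + 1) <= N + 1. *)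
Lemma bin_double (N m : nat) :
  3 * m.+1 <= N.+1 -> 2 * 'C(N, m) <= 'C(N, m.+1).
Proof.
move=> far; rewrite -(leq_pmul2r (ltn0Sn m)) [X in _ <= X]mulnC mul_bin_left.
by rewrite mulnAC leq_mul //; lia.
Qed.

Lemma sum_bin_le (N m : nat) :
  3 * m <= N.+1 -> \sum_(0 <= l < m) 'C(N, l) <= 'C(N, m).
Proof.
elim: m => [|m IH] far; first by rewrite big_geq.
rewrite big_nat_recr //=; have := IH ltac:(lia); have := bin_double far; lia.
Qed.

Lemma binomial_budget (n k s : nat) :
  0 < k -> 3 * k <= n -> 2 * s <= 'C(n.-1, k.-1) ->
  \sum_(0 <= l < k.-1) 'C(n, l) + s <= \sum_(0 <= l < k) 'C(n.-1, l).
Proof.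
case: n => [|N]; first by lia.
case: k => [//|[|j]] _ far /= small_s; first by rewrite big_geq // big_nat1; lia.
rewrite sum_bin_pascal [in X in _ <= X]big_nat_recr //=.
have := sum_bin_le (N := N) (m := j) ltac:(lia).
have := bin_double (N := N) (m := j) ltac:(lia).
lia.
Qed.

Theorem mainTheorem3 (n k : nat) (F : {set {set 'I_n}}) :
  0 < k -> 3 * k <= n ->
  uniform_fam k F -> intersecting F ->
  #|F| * (2 * k) <= 'C(n.-1, k.-1) ->
  #|diff_family F| <= \sum_(0 <= l < k) 'C(n.-1, l).
Proof.
move=> k_gt0 n_ge unifF interF small_F.
have cover := subset_leq_card (diff_family_cover unifF interF).
apply: leq_trans cover _; rewrite cardsU.
apply: leq_trans (leq_subr _ _) _.
apply: leq_trans (binomial_budget (s := #|F| * k) k_gt0 n_ge _).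
  exact: leq_add (card_small_sets n k.-1) (card_shadow unifF).
by rewrite mulnCA.
Qed.
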